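(* Let $j\in\mathbb{N}$, $r\in\mathbb{N}_0$, and let $n=p_1^{a_1}\cdots p_t^{a_t}$ with $t\in\mathbb{N}$, distinct primes $p_1,\dots,p_t$ and $a_1,\dots,a_t\in\mathbb{N}$. Then \[\frac{c_j^{(r)}(n)}{d_{j+r}(n)}=\sum_{i=0}^{j}(-1)^i\binom{j}{i}\frac{\binom{j+r-1}{i}^t}{\prod_{k=1}^t\binom{a_k+j+r-1}{i}}={}_{t+1}F_t\big(\underbrace{1-j-r,\dots,1-j-r}_{t},\,-j;\ 1-a_1-j-r,\dots,1-a_t-j-r;\ 1\big).\] Moreover, if $r\ge 1$, \[\frac{c_j^{(r)}(n)}{d_r(n)}=\sum_{i=0}^{j}(-1)^{j-i}\binom{j}{i}\frac{\prod_{k=1}^t\binom{a_k+i+r-1}{i}}{\binom{i+r-1}{i}^t}=(-1)^j\,{}_{t+1}F_t\big(a_1+r,\dots,a_t+r,\,-j;\ \underbrace{r,\dots,r}_{t};\ 1\big).\]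
   Context: For $j,n\in\mathbb{N}$, $d_j(n)$ is the number of ordered $j$-tuples of positive integers with product $n$, and $c_j(n)$ is the number of ordered $j$-tuples of integers each $\ge 2$ with product $n$. The associated divisor functions are defined by $c_j^{(0)}=c_j$ and $c_j^{(r)}(n)=\sum_{m\mid n}c_j^{(r-1)}(m)$ for $r,n\in\mathbb{N}$. The generalised hypergeometric series is ${}_{p}F_q(\alpha_1,\dots,\alpha_p;\beta_1,\dots,\beta_q;z)=\sum_{i=0}^\infty\frac{\alpha_1^{\overline i}\cdots\alpha_p^{\overline i}z^i}{\beta_1^{\overline i}\cdots\beta_q^{\overline i}\,i!}$ with rising factorial $x^{\overline i}=\prod_{l=0}^{i-1}(x+l)$, $x^{\overline 0}=1$; the series above terminate after the term $i=j$ because $(-j)^{\overline i}=0$ for $i>j$. *)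

From HB Require Import structures.
From mathcomp Require Import all_boot all_order all_algebra.
Set Implicit Arguments. Unset Strict Implicit. Unset Printing Implicit Defensive.
Import Order.TTheory GRing.Theory Num.Theory.

(* d_j(n): ordered j-tuples of positive integers with product n
   (for n >= 1 every entry is <= n, so entries range over 'I_n.+1). *)
Definition dfun (j n : nat) : nat :=
  #|[set f : {ffun 'I_j -> 'I_n.+1} | [forall i, 0 < f i] && (\prod_(i < j) f i == n)]|.

Definition cfun (j n : nat) : nat :=
  #|[set f : {ffun 'I_j -> 'I_n.+1} | [forall i, 1 < f i] && (\prod_(i < j) f i == n)]|.

Fixpoint cfun_r (j r n : nat) : nat :=
  match r with
  | 0 => cfun j n
  | r'.+1 => \sum_(m <- divisors n) cfun_r j r' m
  end.

Local Open Scope ring_scope.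

Definition rising (x : rat) (i : nat) : rat := \prod_(l < i) (x + l%:R).

(* N-th partial sum (terms i = 0 .. N-1) of pFq(alphas; betas; z). *)
Definition hyperF_partial (alphas betas : seq rat) (z : rat) (N : nat) : rat :=
  \sum_(i < N)
    ((\prod_(al <- alphas) rising al i) * z ^+ i)
    / ((\prod_(be <- betas) rising be i) * (i`!)%:R).

From mathcomp Require Import all_boot all_order all_algebra.
From mathcomp Require Import zify ring.
Import Order.TTheory GRing.Theory Num.Theory.
Set Implicit Arguments. Unset Strict Implicit. Unset Printing Implicit Defensive.

(* Splitting off the first factor of an ordered factorization gives the divisor
   recursions d_{m+1}(n) = sum_{x | n} d_m(x) and c_{m+1}(n) + c_m(n) = sum_{x | n} c_m(x)
   (the divisor x = n is the one whose cofactor 1 is not allowed in c).  Hence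
   c_{j+1}^{(r)} = c_j^{(r+1)} - c_j^{(r)}, and induction on j gives
   c_j^{(r)} = sum_i (-1)^i C(j,i) d_{j+r-i}.  For n = prod p_k^{a_k} the divisors of n
   are the exponent vectors b <= a, so the hockey-stick identity gives
   d_m(n) = prod_k C(a_k+m-1, a_k), and every ratio d_{m+s}(n) / d_s(n) becomes a product
   of binomial ratios through C(L-i,a) C(L,i) = C(L-a,i) C(L,a).  Finally the rising
   factorials of -x and of y are i! C(x,i) (-1)^i and i! C(y+i-1,i), so the sums are the
   terminating hypergeometric series. *)

Fixpoint nfactorizations (P : pred nat) (m d : nat) : nat :=
  if m is m'.+1 then \sum_(x <- divisors d | P x) nfactorizations P m' (d %/ x)
  else d == 1.

Definition ffcons (X : Type) m (x : X) (g : {ffun 'I_m -> X}) : {ffun 'I_m.+1 -> X} :=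
  [ffun i => if unlift ord0 i is Some k then g k else x].

Lemma ffcons0 (X : Type) m (x : X) (g : {ffun 'I_m -> X}) : ffcons x g ord0 = x.
Proof. by rewrite ffunE unlift_none. Qed.

Lemma ffconsS (X : Type) m (x : X) (g : {ffun 'I_m -> X}) i :
  ffcons x g (lift ord0 i) = g i.
Proof. by rewrite ffunE liftK. Qed.

Lemma big_ffunS (R : Type) (idx : R) (op : Monoid.com_law idx) (X : finType) m
    (F : {ffun 'I_m.+1 -> X} -> R) :
  \big[op/idx]_f F f = \big[op/idx]_(x : X) \big[op/idx]_(g : {ffun 'I_m -> X}) F (ffcons x g).
Proof.
rewrite pair_big (reindex (fun xg : X * {ffun 'I_m -> X} => ffcons xg.1 xg.2)) //=.
exists (fun f => (f ord0, [ffun k => f (lift ord0 k)])) => [[x g] _ | f _] /=.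
  by rewrite ffcons0; congr pair; apply/ffunP => k; rewrite ffunE ffconsS.
by apply/ffunP => i; rewrite ffunE; case: unliftP => [k ->|->]; rewrite ?ffunE.
Qed.

Lemma sum_ord_divisors (P : pred nat) (G : nat -> nat) N d : 0 < d <= N ->
  \sum_(x < N.+1 | P x && (x %| d)) G x = \sum_(x <- divisors d | P x) G x.
Proof.
case/andP=> d_gt0 leNd; rewrite -(big_mkord (fun x => P x && (x %| d))).
rewrite -big_filter -[RHS]big_filter; apply/perm_big/uniq_perm.
- exact/filter_uniq/iota_uniq.
- exact/filter_uniq/divisors_uniq.
move=> x; rewrite !mem_filter mem_iota -dvdn_divisors //.
case: (P x) (boolP (x %| d)) => [[x_d|] |] //=; rewrite ?andbF //.
by have := dvdn_leq d_gt0 x_d; lia.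
Qed.

Section Factorizations.
Variable P : pred nat.
Hypothesis P0 : ~~ P 0.

Lemma ffcons_factorization m N d (x : 'I_N.+1) (g : {ffun 'I_m -> 'I_N.+1}) :
  [forall i, P (ffcons x g i)] && (\prod_(i < m.+1) ffcons x g i == d)
  = [&& P x, x %| d, [forall i, P (g i)] & \prod_(i < m) g i == d %/ x].
Proof.
rewrite big_ord_recl ffcons0.
under eq_bigr => i _ do rewrite ffconsS.
have -> : [forall i, P (ffcons x g i)] = P x && [forall i, P (g i)].
  apply/forallP/andP => [Pf | [Px /forallP Pg] i].
    by split; [rewrite -(ffcons0 x g) | apply/forallP => i; rewrite -(ffconsS x g)].
  by rewrite ffunE; case: unlift.
have [Px /= | //] := boolP (P x).
have x_gt0 : 0 < x by rewrite lt0n; apply: contraNneq P0 => <-.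
case: [forall i, P (g i)]; rewrite ?andbF //=.
apply/eqP/andP => [<- | [/dvdnP [q ->] /eqP ->]]; last by rewrite mulnK // mulnC.
by rewrite dvdn_mulr // mulKn.
Qed.

Lemma card_factorizations m N d : 0 < d <= N ->
  #|[set f : {ffun 'I_m -> 'I_N.+1} | [forall i, P (f i)] && (\prod_(i < m) f i == d)]|
  = nfactorizations P m d.
Proof.
elim: m d => [|m IHm] d /andP [d_gt0 leNd].
  rewrite -sum1dep_card /=.
  have P_none (f : {ffun 'I_0 -> 'I_N.+1}) : [forall i, P (f i)] by apply/forallP => [[]].
  under eq_bigl => f do rewrite big_ord0 P_none eq_sym andTb.
  case: (d == 1); last by rewrite big_pred0.
  by rewrite sum1dep_card cardsT card_ffun !card_ord.
rewrite -sum1dep_card big_mkcond big_ffunS /=.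
under eq_bigr => x _ do under eq_bigr => g _ do rewrite ffcons_factorization.
rewrite -(@sum_ord_divisors _ _ N) ?d_gt0 // [RHS]big_mkcond; apply: eq_bigr => x _ /=.
case: ifP => [/andP [Px x_d] | not_Px_d]; last by rewrite big1 // => g _; rewrite andbA not_Px_d.
rewrite Px x_d -big_mkcond sum1dep_card IHm // divn_gt0 ?(dvdn_leq d_gt0) //=.
  exact: leq_trans (leq_div _ _) leNd.
by rewrite lt0n; apply: contraNneq P0 => <-.
Qed.
End Factorizations.

Lemma divisors_gt0 d x : x \in divisors d -> 0 < x.
Proof.
case: (posnP d) => [-> | d_gt0]; first by rewrite (_ : divisors 0 = [:: 1]) // inE => /eqP ->.
by rewrite -dvdn_divisors // => /dvdn_gt0; apply.
Qed.

Lemma divnK_divisors d x : 0 < d -> x \in divisors d -> d %/ (d %/ x) = x.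
Proof.
by move=> d_gt0; rewrite -dvdn_divisors // => x_d; rewrite divnA // mulKn.
Qed.

Lemma big_divisors_compl (R : Type) (idx : R) (op : Monoid.com_law idx) d (F : nat -> R) :
  0 < d -> \big[op/idx]_(x <- divisors d) F (d %/ x) = \big[op/idx]_(x <- divisors d) F x.
Proof.
move=> d_gt0; rewrite -(big_map (divn d) xpredT F); apply/perm_big/uniq_perm.
- rewrite map_inj_in_uniq ?divisors_uniq // => x y x_d y_d eq_dxy.
  by rewrite -(divnK_divisors d_gt0 x_d) eq_dxy divnK_divisors.
- exact: divisors_uniq.
move=> y; apply/mapP/idP => [[x x_d ->] | y_d]; last first.
  by exists (d %/ y); rewrite ?divnK_divisors // -dvdn_divisors ?dvdn_div ?dvdn_divisors.
by rewrite -dvdn_divisors ?dvdn_div ?dvdn_divisors.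
Qed.

Lemma nfactorizationsS P m d : 0 < d ->
  nfactorizations P m.+1 d = \sum_(x <- divisors d | P (d %/ x)) nfactorizations P m x.
Proof.
move=> d_gt0; rewrite /= big_mkcond [RHS]big_mkcond -[in RHS]big_divisors_compl //.
by rewrite !big_seq; apply: eq_bigr => x x_d; rewrite divnK_divisors.
Qed.

Lemma dfun_nfactorizations m d : 0 < d -> dfun m d = nfactorizations (fun x => 0 < x) m d.
Proof.
by move=> d_gt0; rewrite -(@card_factorizations (fun x => 0 < x) isT m d d) ?d_gt0 ?leqnn.
Qed.

Lemma cfun_nfactorizations m d : 0 < d -> cfun m d = nfactorizations (fun x => 1 < x) m d.
Proof.
by move=> d_gt0; rewrite -(@card_factorizations (fun x => 1 < x) isT m d d) ?d_gt0 ?leqnn.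
Qed.

Lemma dfunS m d : 0 < d -> dfun m.+1 d = \sum_(x <- divisors d) dfun m x.
Proof.
move=> d_gt0; rewrite dfun_nfactorizations // nfactorizationsS // big_seq_cond [RHS]big_seq.
apply: eq_big => [x | x /andP [x_d _]]; last by rewrite dfun_nfactorizations ?(divisors_gt0 x_d).
have [x_d /= | //] := boolP (x \in divisors d).
by rewrite divn_gt0 ?(divisors_gt0 x_d) // dvdn_leq // dvdn_divisors.
Qed.

Lemma cfunS m d : 0 < d -> cfun m.+1 d + cfun m d = \sum_(x <- divisors d) cfun m x.
Proof.
move=> d_gt0; rewrite (bigD1_seq d) ?divisors_id ?divisors_uniq //= addnC; congr (_ + _).
rewrite cfun_nfactorizations // nfactorizationsS // big_seq_cond [RHS]big_seq_cond.
apply: eq_big => [x | x /andP [x_d _]]; last by rewrite cfun_nfactorizations ?(divisors_gt0 x_d).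
have [x_d /= | //] := boolP (x \in divisors d).
rewrite -dvdn_divisors // in x_d.
have x_gt0 := dvdn_gt0 d_gt0 x_d.
have q_gt0 : 0 < d %/ x by rewrite divn_gt0 // dvdn_leq.
rewrite -{2}(divnK x_d) -[X in X != _]mul1n eqn_mul2r eqn0Ngt x_gt0 /=.
by case: (d %/ x) q_gt0 => [|[]].
Qed.

Lemma cfun_r0 r d : 0 < d -> cfun_r 0 r d = dfun r d.
Proof.
elim: r d => [|r IHr] d d_gt0; first by rewrite /= cfun_nfactorizations // dfun_nfactorizations.
rewrite /= dfunS // !big_seq; apply: eq_bigr => x x_d.
by rewrite IHr ?(divisors_gt0 x_d).
Qed.

Section CfunRing.
Variable R : pzRingType.
Local Open Scope ring_scope.

Lemma cfun_rS j r d : (0 < d)%N ->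
  (cfun_r j.+1 r d)%:R = (cfun_r j r.+1 d)%:R - (cfun_r j r d)%:R :> R.
Proof.
elim: r d => [|r IHr] d d_gt0; first by rewrite /= -cfunS // natrD addrK.
rewrite /= !natr_sum -sumrB !big_seq; apply: eq_bigr => x x_d.
by rewrite IHr ?(divisors_gt0 x_d).
Qed.

Lemma cfun_r_dfun j r d : (0 < d)%N ->
  (cfun_r j r d)%:R = \sum_(i < j.+1) (-1) ^+ i * 'C(j, i)%:R * (dfun (j + r - i) d)%:R :> R.
Proof.
move=> d_gt0; elim: j r => [|j IHj] r.
  by rewrite big_ord1 /= cfun_r0 // expr0 !mul1r subn0.
rewrite cfun_rS // !IHj [in RHS]big_ord_recl [in X in X - _ = _]big_ord_recl.
rewrite !expr0 !bin0 !mul1r !subn0 addnS addSn -addrA; congr (_ + _).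
under [in RHS]eq_bigr => i _ do rewrite lift0 binS natrD mulrDr mulrDl.
rewrite big_split /=; congr (_ + _).
  rewrite [in RHS]big_ord_recr /= bin_small // mulr0 mul0r addr0.
  by apply: eq_bigr.
rewrite -sumrN; apply: eq_bigr => i _.
by rewrite subSS exprS mulN1r !mulNr.
Qed.

End CfunRing.

Lemma logn_prod (I : Type) (r : seq I) (P : pred I) (F : I -> nat) q :
    (forall i, P i -> 0 < F i) ->
  logn q (\prod_(i <- r | P i) F i) = \sum_(i <- r | P i) logn q (F i).
Proof.
move=> F_gt0; elim: r => [|i r IHr]; first by rewrite !big_nil logn1.
rewrite !big_cons; case: ifP => // Pi.
by rewrite lognM ?IHr ?F_gt0 // prodn_cond_gt0.
Qed.

Lemma hockey_stick m a : \sum_(c < a.+1) 'C(c + m - 1, c) = 'C(a + m, a).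
Proof.
elim: a => [|a IHa]; first by rewrite big_ord1 !bin0.
by rewrite big_ord_recr /= IHa addSn subn1 /= binS addnC.
Qed.

Lemma dfun0 d : 0 < d -> dfun 0 d = (d == 1).
Proof. exact: dfun_nfactorizations. Qed.

Lemma ffactnD n i a : n ^_ (i + a) = n ^_ i * (n - i) ^_ a.
Proof.
elim: a => [|a IHa]; first by rewrite addn0 ffactn0 muln1.
by rewrite addnS !ffactnSr IHa subnDA mulnA.
Qed.

Lemma mul_bin_sub L a i : 'C(L - i, a) * 'C(L, i) = 'C(L - a, i) * 'C(L, a).
Proof.
apply/eqP; rewrite -(@eqn_pmul2r (a`! * i`!)) ?muln_gt0 ?fact_gt0 // mulnACA.
rewrite [a`! * _]mulnC [X in _ == X]mulnACA !bin_ffact.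
by rewrite mulnC -ffactnD [X in _ == X]mulnC -ffactnD addnC.
Qed.

Section PrimePowers.
Variables (t : nat) (p : 'I_t -> nat).
Hypothesis p_prime : forall k, prime (p k).
Hypothesis p_inj : injective p.

Definition prod_pow (e : 'I_t -> nat) : nat := \prod_(k < t) p k ^ e k.

Lemma prod_pow_gt0 e : 0 < prod_pow e.
Proof. by apply: prodn_gt0 => k; rewrite expn_gt0 prime_gt0. Qed.

Lemma logn_prod_pow q e : logn q (prod_pow e) = \sum_(k | p k == q) e k.
Proof.
rewrite logn_prod => [|k _]; last by rewrite expn_gt0 prime_gt0.
rewrite [RHS]big_mkcond; apply: eq_bigr => k _.
by rewrite lognX logn_prime // eq_sym; case: eqP; rewrite ?muln1 ?muln0.
Qed.

Lemma logn_prod_pow_p k e : logn (p k) (prod_pow e) = e k.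
Proof. by rewrite logn_prod_pow (big_pred1 k) // => k'; rewrite /= inj_eq. Qed.

Lemma logn_dvdn_prod_pow k x a : x %| prod_pow a -> logn (p k) x <= a k.
Proof. by move=> x_a; rewrite -(logn_prod_pow_p k a) dvdn_leq_log ?prod_pow_gt0. Qed.

Lemma dvdn_prod_pow b a : (forall k, b k <= a k) -> prod_pow b %| prod_pow a.
Proof.
move=> le_ba; apply: (big_ind2 (fun x y => x %| y)) => [|x1 x2 y1 y2|k _]; first exact: dvdnn.
  exact: dvdn_mul.
by rewrite dvdn_exp2l.
Qed.

Lemma prod_pow_logn x a : x %| prod_pow a -> prod_pow (fun k => logn (p k) x) = x.
Proof.
move=> x_a; have x_gt0 := dvdn_gt0 (prod_pow_gt0 a) x_a.
apply: eqn_from_log; rewrite ?prod_pow_gt0 // => q; rewrite logn_prod_pow.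
have [/existsP [k /eqP <-] | no_k] := boolP [exists k, p k == q].
  by rewrite (big_pred1 k) // => k'; rewrite /= inj_eq.
have no_k' k : (p k == q) = false by apply/negbTE; move: no_k; rewrite negb_exists => /forallP.
apply/esym/eqP; rewrite big_pred0 // -leqn0.
by rewrite (leq_trans (dvdn_leq_log q (prod_pow_gt0 a) x_a)) // logn_prod_pow big_pred0.
Qed.

Lemma big_divisors_prod_pow (R : Type) (idx : R) (op : Monoid.com_law idx) (F : nat -> R) a B :
    (forall k, a k <= B) ->
  \big[op/idx]_(x <- divisors (prod_pow a)) F x
  = \big[op/idx]_(b : {ffun 'I_t -> 'I_B.+1} | [forall k, b k <= a k])
      F (prod_pow (fun k => b k)).
Proof.
move=> le_aB; set prod_pow_ord := fun b : {ffun 'I_t -> 'I_B.+1} => prod_pow (fun k => b k).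
rewrite -[RHS]big_filter -[RHS](big_map prod_pow_ord xpredT F).
apply/perm_big/uniq_perm; first exact: divisors_uniq.
  rewrite map_inj_in_uniq ?filter_uniq ?index_enum_uniq // => b1 b2 _ _.
  rewrite /prod_pow_ord => eq_b12; apply/ffunP => k; apply: val_inj.
  by rewrite /= -[LHS](logn_prod_pow_p k (fun k => b1 k)) eq_b12 logn_prod_pow_p.
move=> x; rewrite -dvdn_divisors ?prod_pow_gt0 //; apply/idP/mapP => [x_a | [b]]; last first.
  by rewrite mem_filter => /andP [/forallP le_ba _] ->; apply: dvdn_prod_pow.
have lt_logB k : logn (p k) x < B.+1 by rewrite ltnS (leq_trans (logn_dvdn_prod_pow k x_a)).
exists [ffun k => Ordinal (lt_logB k)]; last first.
  by rewrite -[LHS](prod_pow_logn x_a); apply: eq_bigr => k _; rewrite ffunE.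
rewrite mem_filter mem_index_enum andbT; apply/forallP => k.
by rewrite ffunE logn_dvdn_prod_pow.
Qed.

Lemma dfun_prod_pow m a : dfun m (prod_pow a) = \prod_(k < t) 'C(a k + m - 1, a k).
Proof.
elim: m a => [|m IHm] a.
  rewrite dfun0 ?prod_pow_gt0 //; have [a0 | ] := boolP [forall k, a k == 0].
    have a0k k : a k = 0 by apply/eqP/(forallP a0).
    have -> : prod_pow a = 1 by apply: big1 => k _; rewrite a0k.
    by rewrite big1 // => k _; rewrite a0k.
  rewrite negb_forall => /existsP [k a_k].
  rewrite (bigD1 k) //= bin_small ?mul0n; last by rewrite addn0 subn1 ltn_predL lt0n.
  apply/eqP; rewrite eqb0; apply: contra a_k => /eqP a1.
  by rewrite -(logn_prod_pow_p k a) a1 logn1.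
set B := \max_k a k; have le_aB k : a k <= B by apply: leq_bigmax.
rewrite dfunS ?prod_pow_gt0 // (big_divisors_prod_pow _ _ le_aB).
under eq_bigr => b _ do rewrite IHm.
transitivity (\prod_k \sum_(c : 'I_B.+1 | c <= a k) 'C(c + m - 1, c)).
  by rewrite bigA_distr_big_dep; apply: eq_bigl => b; apply/forallP/familyP.
apply: eq_bigr => k _; rewrite addnS subn1 /= -hockey_stick.
by rewrite (big_ord_widen _ (fun c => 'C(c + m - 1, c)) (le_aB k : (a k).+1 <= B.+1)).
Qed.

Lemma dfun_prod_pow_gt0 s a : 0 < s -> 0 < dfun s (prod_pow a).
Proof. by move=> s_gt0; rewrite dfun_prod_pow prodn_gt0 // => k; rewrite bin_gt0; lia. Qed.

Lemma dfun_prod_pow_shift m s a : (forall k, 0 < a k) ->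
  dfun s (prod_pow a) * \prod_(k < t) 'C(a k + m + s - 1, m)
  = dfun (m + s) (prod_pow a) * 'C(m + s - 1, m) ^ t.
Proof.
move=> a_gt0; rewrite !dfun_prod_pow -[t in _ ^ t]card_ord -prod_nat_const -!big_split /=.
apply: eq_bigr => k _; have := a_gt0 k; set L := a k + m + s - 1 => a_k_gt0.
have -> : a k + s - 1 = L - m by lia.
have -> : m + s - 1 = L - a k by lia.
by rewrite mul_bin_sub mulnC addnA.
Qed.

End PrimePowers.

Section Ratios.
Variable R : numFieldType.
Local Open Scope ring_scope.

Lemma eq_natr_div (x y z w : nat) : (0 < y)%N -> (0 < w)%N -> (x * w = z * y)%N ->
  x%:R / y%:R = z%:R / w%:R :> R.
Proof.
move=> y_gt0 w_gt0 xwzy; apply/eqP.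
by rewrite eqr_div ?pnatr_eq0 -?lt0n // -!natrM xwzy.
Qed.

Lemma cfun_r_div_dfun_jr j r t (p a : 'I_t -> nat) :
    (forall k, prime (p k)) -> injective p -> (forall k, 0 < a k)%N -> (0 < j + r)%N ->
  (cfun_r j r (prod_pow p a))%:R / (dfun (j + r) (prod_pow p a))%:R
  = \sum_(i < j.+1) (-1) ^+ i * 'C(j, i)%:R
      * ('C(j + r - 1, i)%:R ^+ t / \prod_(k < t) 'C(a k + j + r - 1, i)%:R) :> R.
Proof.
move=> p_prime p_inj a_gt0 jr_gt0.
rewrite cfun_r_dfun ?prod_pow_gt0 // mulr_suml; apply: eq_bigr => i _.
have le_ij : (i <= j)%N by rewrite -ltnS.
rewrite -[LHS]mulrA -natrX -natr_prod; congr (_ * _); apply: eq_natr_div.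
- exact: dfun_prod_pow_gt0.
- by rewrite prodn_gt0 // => k; rewrite bin_gt0; have := a_gt0 k; lia.
have := dfun_prod_pow_shift p_prime p_inj i (j + r - i) a_gt0.
rewrite subnKC ?(leq_trans le_ij (leq_addr _ _)) // => shift.
rewrite [RHS]mulnC -shift; congr (_ * _).
by apply: eq_bigr => k _; congr 'C(_, _); lia.
Qed.

Lemma cfun_r_div_dfun_r j r t (p a : 'I_t -> nat) :
    (forall k, prime (p k)) -> injective p -> (forall k, 0 < a k)%N -> (0 < r)%N ->
  (cfun_r j r (prod_pow p a))%:R / (dfun r (prod_pow p a))%:R
  = \sum_(i < j.+1) (-1) ^+ (j - i) * 'C(j, i)%:R
      * ((\prod_(k < t) 'C(a k + i + r - 1, i)%:R) / 'C(i + r - 1, i)%:R ^+ t) :> R.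
Proof.
move=> p_prime p_inj a_gt0 r_gt0.
rewrite cfun_r_dfun ?prod_pow_gt0 // mulr_suml [RHS](reindex_inj rev_ord_inj) /=.
apply: eq_bigr => i _; have le_ij : (i <= j)%N by rewrite -ltnS.
rewrite subSS subKn // bin_sub // -[LHS]mulrA -natrX -natr_prod; congr (_ * _).
apply: eq_natr_div; first exact: dfun_prod_pow_gt0.
  by rewrite expn_gt0 bin_gt0; lia.
by rewrite [RHS]mulnC dfun_prod_pow_shift // addnBAC.
Qed.

End Ratios.

Local Open Scope ring_scope.

Lemma rising_nat (y i : nat) : rising y%:R i = 'C(y + i - 1, i)%:R * i`!%:R.
Proof.
rewrite -natrM bin_ffact; elim: i => [|i IHi]; first by rewrite /rising big_ord0.
rewrite /rising big_ord_recr /= -/(rising _ _) IHi addnS subSS subn0 ffactnS.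
by rewrite -natrD natrM mulrC subn1.
Qed.

Lemma rising_Nnat (x i : nat) : rising (- x%:R) i = (-1) ^+ i * i`!%:R * 'C(x, i)%:R.
Proof.
rewrite -mulrA -natrM mulnC bin_ffact.
elim: i => [|i IHi]; first by rewrite /rising big_ord0 expr0 mul1r.
rewrite /rising big_ord_recr /= -/(rising _ _) IHi ffactnSr natrM exprS.
have [le_ix | lt_xi] := leqP i x; first by rewrite natrB //; ring.
by rewrite ffact_small // !(mulr0, mul0r).
Qed.

Definition hyperF_term (alphas betas : seq rat) (z : rat) (i : nat) : rat :=
  ((\prod_(al <- alphas) rising al i) * z ^+ i) / ((\prod_(be <- betas) rising be i) * i`!%:R).

Lemma hyperF_partialE alphas betas z N :
  hyperF_partial alphas betas z N = \sum_(i < N) hyperF_term alphas betas z i.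
Proof. by []. Qed.

Lemma hyperF_partial_Nnat (al be : seq rat) z j N : (j < N)%N ->
  hyperF_partial (al ++ [:: - j%:R]) be z N = hyperF_partial (al ++ [:: - j%:R]) be z j.+1.
Proof.
move=> lt_jN; rewrite !hyperF_partialE (big_ord_widen _ (hyperF_term _ _ _) lt_jN).
rewrite [RHS]big_mkcond; apply: eq_bigr => i _; case: ltnP => // le_ji.
by rewrite /hyperF_term big_cat big_seq1 /= rising_Nnat bin_small // !(mulr0, mul0r).
Qed.

Lemma prodrMl_ord (R : comPzRingType) t (x : R) (F : 'I_t -> R) :
  \prod_(k < t) (x * F k) = x ^+ t * \prod_(k < t) F k.
Proof. by rewrite prodrMl card_ord. Qed.

Lemma oneB_natr (R : pzRingType) n : (0 < n)%N -> 1 - n%:R = - (n - 1)%:R :> R.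
Proof. by move=> n_gt0; rewrite natrB // opprB. Qed.

Lemma sum_bin_hyperF_Nnat j c t (b : 'I_t -> nat) N : (j < N)%N -> (forall k, j <= b k)%N ->
  \sum_(i < j.+1) (-1) ^+ i * 'C(j, i)%:R * ('C(c, i)%:R ^+ t / \prod_(k < t) 'C(b k, i)%:R)
  = hyperF_partial (nseq t (- c%:R) ++ [:: - j%:R]) [seq - (b k)%:R | k <- enum 'I_t] 1 N.
Proof.
move=> lt_jN le_jb; rewrite hyperF_partial_Nnat // hyperF_partialE; apply: eq_bigr => i _.
rewrite /hyperF_term big_cat big_seq1 /= big_nseq iter_mulr_1 enumT big_map /= expr1n mulr1.
under [in RHS]eq_bigr => k _ do rewrite rising_Nnat.
rewrite !rising_Nnat prodrMl_ord exprMn.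
have P_neq0 : \prod_(k < t) 'C(b k, i)%:R != 0 :> rat.
  rewrite prodf_seq_neq0; apply/allP => k _.
  by rewrite pnatr_eq0 -lt0n bin_gt0 (leq_trans _ (le_jb k)) // -ltnS.
have f_neq0 : i`!%:R != 0 :> rat by rewrite pnatr_eq0 -lt0n fact_gt0.
have ut_neq0 : ((-1) ^+ i * i`!%:R) ^+ t != 0 :> rat.
  by rewrite expf_neq0 // mulf_neq0 ?signr_eq0.
(* [field] only handles numeral exponents, so the powers are made atoms. *)
set ut := _ ^+ t in ut_neq0 *; set ct := _ ^+ t; set s := (-1) ^+ i.
by field; rewrite f_neq0 P_neq0 ut_neq0.
Qed.

Lemma sum_bin_hyperF_nat j r t (a : 'I_t -> nat) N : (0 < r)%N -> (j < N)%N ->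
  \sum_(i < j.+1) (-1) ^+ (j - i) * 'C(j, i)%:R
    * ((\prod_(k < t) 'C(a k + i + r - 1, i)%:R) / 'C(i + r - 1, i)%:R ^+ t)
  = (-1) ^+ j * hyperF_partial ([seq (a k + r)%:R | k <- enum 'I_t] ++ [:: - j%:R])
                 (nseq t r%:R) 1 N.
Proof.
move=> r_gt0 lt_jN; rewrite hyperF_partial_Nnat // hyperF_partialE mulr_sumr.
apply: eq_bigr => i _; have le_ij : (i <= j)%N by rewrite -ltnS.
rewrite /hyperF_term big_cat big_seq1 /= big_nseq iter_mulr_1 enumT big_map /= expr1n mulr1.
under [in RHS]eq_bigr => k _ do rewrite rising_nat addnAC mulrC.
rewrite rising_nat rising_Nnat prodrMl_ord [(r + i)%N]addnC.
rewrite -signr_odd oddB // signr_addb !signr_odd.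
have C_neq0 : 'C(i + r - 1, i)%:R != 0 :> rat by rewrite pnatr_eq0 -lt0n bin_gt0; lia.
have f_neq0 : i`!%:R != 0 :> rat by rewrite pnatr_eq0 -lt0n fact_gt0.
have ft_neq0 := expf_neq0 t f_neq0; have Ct_neq0 := expf_neq0 t C_neq0.
rewrite exprMn; set ft := _ ^+ t in ft_neq0 *; set Ct := _ ^+ t in Ct_neq0 *.
set sj := (-1) ^+ j; set si := (-1) ^+ i.
by field; rewrite f_neq0 ft_neq0 Ct_neq0.
Qed.

Theorem theorem2 (j r t : nat) (p a : 'I_t -> nat) (n : nat) :
  (0 < j)%N -> (0 < t)%N ->
  (forall k, prime (p k)) -> injective p ->
  (forall k, (0 < a k)%N) ->
  n = (\prod_(k < t) p k ^ a k)%N ->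
  ((cfun_r j r n)%:R / (dfun (j + r) n)%:R : rat)
    = \sum_(i < j.+1) (-1) ^+ i * ('C(j, i))%:R
        * (('C(j + r - 1, i))%:R ^+ t / \prod_(k < t) ('C(a k + j + r - 1, i))%:R)
  /\ (forall N, (j < N)%N ->
      \sum_(i < j.+1) (-1) ^+ i * ('C(j, i))%:R
        * (('C(j + r - 1, i))%:R ^+ t / \prod_(k < t) ('C(a k + j + r - 1, i))%:R)
      = hyperF_partial
          (nseq t (1 - (j + r)%:R) ++ [:: - (j%:R)])
          [seq 1 - (a k + j + r)%:R | k <- enum 'I_t] 1 N)
  /\ ((0 < r)%N ->
      ((cfun_r j r n)%:R / (dfun r n)%:R : rat)
        = \sum_(i < j.+1) (-1) ^+ (j - i) * ('C(j, i))%:R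
            * ((\prod_(k < t) ('C(a k + i + r - 1, i))%:R) / ('C(i + r - 1, i))%:R ^+ t)
      /\ (forall N, (j < N)%N ->
          \sum_(i < j.+1) (-1) ^+ (j - i) * ('C(j, i))%:R
            * ((\prod_(k < t) ('C(a k + i + r - 1, i))%:R) / ('C(i + r - 1, i))%:R ^+ t)
          = (-1) ^+ j * hyperF_partial
              ([seq (a k + r)%:R | k <- enum 'I_t] ++ [:: - (j%:R)])
              (nseq t (r%:R)) 1 N)).
Proof.
move=> j_gt0 _ p_prime p_inj a_gt0 ->.
have jr_gt0 : (0 < j + r)%N by rewrite addn_gt0 j_gt0.
split; first exact: cfun_r_div_dfun_jr.
split => [N lt_jN | r_gt0]; last first.
  by split => [|N lt_jN]; [exact: cfun_r_div_dfun_r | exact: sum_bin_hyperF_nat].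
have ajr_gt0 k : (0 < a k + j + r)%N by rewrite -addnA addn_gt0 a_gt0.
rewrite oneB_natr // (eq_map (fun k => oneB_natr _ (ajr_gt0 k))).
by apply: sum_bin_hyperF_Nnat => // k; have := a_gt0 k; lia.
Qed.
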